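(* Let $v$ be a typical weight and let $X$ be an initial space such that for every $f\in X$ and $0\le r<1$ the function $f_r(z)=f(rz)$ belongs to $X$, and $\sup_{0\le r<1}\|f_r\|_X\le C\|f\|_X$ for a constant $C$ independent of $f$. Let $T$ be an intrinsic operator on $\mathcal{H}(\mathbb{D})$ such that $Tf_r\in H_{v,0}$ for all $f\in X$ and all $0\le r<1$. If $T:X\to H_v$ is weakly compact, then $T:X\to H_{v,0}$ is bounded.
   Context: $\mathcal{H}(\mathbb{D})$ is the space of holomorphic functions on the unit disk $\mathbb{D}$ with the topology $\tau_{uc}$ of uniform convergence on compact subsets. A linear operator $T$ on $\mathcal{H}(\mathbb{D})$ is intrinsic if it maps $\tau_{uc}$-convergent sequences to $\tau_{uc}$-convergent sequences. An initial space is a Banach space $X\subset\mathcal{H}(\mathbb{D})$ containing the polynomials such that every sequence in the closed unit ball of $X$ has a subsequence converging in $\tau_{uc}$ to some function in $X$. A typical weight is a continuous radial $v:\mathbb{D}\to(0,1]$, non-increasing in $|z|$, with $v(z)\to0$ as $|z|\to1$. $H_v=\{f\in\mathcal{H}(\mathbb{D}):\sup_z v(z)|f(z)|<\infty\}$ with that supremum as norm, and $H_{v,0}=\{f:\lim_{|z|\to1}v(z)|f(z)|=0\}$. *)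

From Stdlib Require Import Reals Lra List.
From Coquelicot Require Import Coquelicot.
Open Scope R_scope.

Definition Dk : Type := {z : C | Cmod z < 1}.

(** Functions on the disk (candidates for elements of H(D)). *)
Definition HD : Type := Dk -> C.

Definition fzero : HD := fun _ => RtoC 0.
Definition fadd (f g : HD) : HD := fun z => Cplus (f z) (g z).
Definition fscal (c : C) (f : HD) : HD := fun z => Cmult c (f z).
Definition fsub (f g : HD) : HD := fun z => Cminus (f z) (g z).

Definition holo (f : HD) : Prop :=
  forall z : Dk, exists l : C, forall eps, 0 < eps -> exists del, 0 < del /\
    forall w : Dk, 0 < Cmod (Cminus (proj1_sig w) (proj1_sig z)) < del ->
      Cmod (Cminus (Cdiv (Cminus (f w) (f z)) (Cminus (proj1_sig w) (proj1_sig z))) l) < eps.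

Fixpoint cpoly (a : nat -> C) (n : nat) (z : C) : C :=
  match n with
  | O => a O
  | S m => Cplus (cpoly a m z) (Cmult (a n) (Cpow z n))
  end.
Definition poly_fun (a : nat -> C) (n : nat) : HD := fun z => cpoly a n (proj1_sig z).

(** Convergence in tau_uc (uniform convergence on compact subsets of D),
    expressed via the exhausting closed subdisks |z| <= r, r < 1. *)
Definition uc_conv (fs : nat -> HD) (g : HD) : Prop :=
  forall r, 0 <= r < 1 -> forall eps, 0 < eps -> exists N : nat,
    forall n, (N <= n)%nat -> forall z : Dk, Cmod (proj1_sig z) <= r ->
      Cmod (Cminus (fs n z) (g z)) < eps.

Definition linear_op_HD (T : HD -> HD) : Prop :=
  (forall f, holo f -> holo (T f)) /\
  (forall f g, holo f -> holo g -> T (fadd f g) = fadd (T f) (T g)) /\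
  (forall c f, holo f -> T (fscal c f) = fscal c (T f)).

Definition intrinsic (T : HD -> HD) : Prop :=
  forall (fs : nat -> HD) (g : HD), (forall n, holo (fs n)) -> holo g ->
    uc_conv fs g -> exists h : HD, holo h /\ uc_conv (fun n => T (fs n)) h.

Definition banach_subspace (X : HD -> Prop) (N : HD -> R) : Prop :=
  (forall f, X f -> holo f) /\
  X fzero /\
  (forall f g, X f -> X g -> X (fadd f g)) /\
  (forall c f, X f -> X (fscal c f)) /\
  (forall f, X f -> 0 <= N f) /\
  (forall f, X f -> N f = 0 -> f = fzero) /\
  (forall c f, X f -> N (fscal c f) = Cmod c * N f) /\
  (forall f g, X f -> X g -> N (fadd f g) <= N f + N g) /\
  (forall fs : nat -> HD, (forall n, X (fs n)) ->
     (forall eps, 0 < eps -> exists M : nat, forall m n, (M <= m)%nat -> (M <= n)%nat ->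
        N (fsub (fs m) (fs n)) < eps) ->
     exists g, X g /\ forall eps, 0 < eps -> exists M : nat, forall n, (M <= n)%nat ->
        N (fsub (fs n) g) < eps).

Definition initial_space (X : HD -> Prop) (N : HD -> R) : Prop :=
  banach_subspace X N /\
  (forall a n, X (poly_fun a n)) /\
  (forall fs : nat -> HD, (forall n, X (fs n) /\ N (fs n) <= 1) ->
     exists (phi : nat -> nat) (g : HD),
       (forall n, (phi n < phi (S n))%nat) /\ X g /\ uc_conv (fun n => fs (phi n)) g).

Definition typical_weight (v : Dk -> R) : Prop :=
  (forall z, 0 < v z <= 1) /\
  (forall z w, Cmod (proj1_sig z) = Cmod (proj1_sig w) -> v z = v w) /\
  (forall z w, Cmod (proj1_sig z) <= Cmod (proj1_sig w) -> v w <= v z) /\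
  (forall z eps, 0 < eps -> exists del, 0 < del /\ forall w : Dk,
      Cmod (Cminus (proj1_sig w) (proj1_sig z)) < del -> Rabs (v w - v z) < eps) /\
  (forall eps, 0 < eps -> exists rho, rho < 1 /\ forall z : Dk,
      rho < Cmod (proj1_sig z) -> v z < eps).

Definition Hv (v : Dk -> R) (f : HD) : Prop :=
  holo f /\ exists M, forall z, v z * Cmod (f z) <= M.

Definition Hv0 (v : Dk -> R) (f : HD) : Prop :=
  holo f /\ forall eps, 0 < eps -> exists rho, rho < 1 /\ forall z : Dk,
      rho < Cmod (proj1_sig z) -> v z * Cmod (f z) < eps.

(** Bounded linear functionals on H_v ( |phi f| <= M ||f||_v ). *)
Definition Hv_dual (v : Dk -> R) (phi : HD -> C) : Prop :=
  (forall f g, Hv v f -> Hv v g -> phi (fadd f g) = Cplus (phi f) (phi g)) /\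
  (forall c f, Hv v f -> phi (fscal c f) = Cmult c (phi f)) /\
  exists M, forall f K, Hv v f -> (forall z, v z * Cmod (f z) <= K) ->
    Cmod (phi f) <= M * K.

Definition weak_open (v : Dk -> R) (U : HD -> Prop) : Prop :=
  (forall f, U f -> Hv v f) /\
  forall g, U g -> exists (phis : list (HD -> C)) eps, 0 < eps /\
    List.Forall (Hv_dual v) phis /\
    forall f, Hv v f -> (forall phi, In phi phis -> Cmod (Cminus (phi f) (phi g)) < eps) -> U f.

Definition weak_closure (v : Dk -> R) (A : HD -> Prop) : HD -> Prop :=
  fun g => Hv v g /\ forall U, weak_open v U -> U g -> exists f, A f /\ U f.

Definition weak_compact (v : Dk -> R) (K : HD -> Prop) : Prop :=
  (forall f, K f -> Hv v f) /\
  forall F : (HD -> Prop) -> Prop, (forall U, F U -> weak_open v U) ->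
    (forall g, K g -> exists U, F U /\ U g) ->
    exists l : list (HD -> Prop), List.Forall F l /\ forall g, K g -> exists U, In U l /\ U g.

Definition rel_weak_compact (v : Dk -> R) (A : HD -> Prop) : Prop :=
  weak_compact v (weak_closure v A).

Definition weakly_compact_op (v : Dk -> R) (X : HD -> Prop) (N : HD -> R) (T : HD -> HD) : Prop :=
  (forall f, X f -> Hv v (T f)) /\
  rel_weak_compact v (fun h => exists f, X f /\ N f <= 1 /\ h = T f).

Lemma dil_pt_proof (r : R) (z : Dk) : Rabs r < 1 -> Cmod (Cmult (RtoC r) (proj1_sig z)) < 1.
Proof.
  intros H. rewrite Cmod_mult, Cmod_R. destruct z as [z Hz]; simpl.
  pose proof (Rabs_pos r). pose proof (Cmod_ge_0 z). nra.
Qed.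

Definition dil_pt (r : R) (z : Dk) : Dk :=
  match Rlt_dec (Rabs r) 1 with
  | left H => exist _ (Cmult (RtoC r) (proj1_sig z)) (dil_pt_proof r z H)
  | right _ => z
  end.

Definition dil (r : R) (f : HD) : HD := fun z => f (dil_pt r z).

(* Boundedness: the weakly compact set T(B_X) in H_v is bounded under every functional,
   in particular pointwise; a gliding-hump functional, a weighted series of rotated point
   evaluations, turns pointwise into norm boundedness.
   Vanishing: for f in X the dilations f_r, scaled into the unit ball of X, have a
   subsequence converging in tau_uc, necessarily to a multiple of f, so T maps it to a
   sequence in H_v0 inside T(B_X) converging pointwise to the same multiple of T f. A weak
   cluster point of that sequence is this pointwise limit, which therefore cannot be
   separated from H_v0 by a continuous functional; but if T f were not in H_v0, a Banach
   limit of rotated point evaluations along points tending to the boundary would separate it. *)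

From Stdlib Require Import Reals Lra Lia List.
From Stdlib Require Import FunctionalExtensionality ClassicalEpsilon Classical ProofIrrelevance.
From Coquelicot Require Import Coquelicot.
From mathcomp Require ssrnat filter.
Open Scope R_scope.

Lemma Rabs_Re_le_Cmod (x : C) : Rabs (Re x) <= Cmod x.
Proof. pose proof (Rmax_Cmod x); pose proof (Rmax_l (Rabs (fst x)) (Rabs (snd x))); unfold Re; lra. Qed.

Lemma Rabs_Im_le_Cmod (x : C) : Rabs (Im x) <= Cmod x.
Proof. pose proof (Rmax_Cmod x); pose proof (Rmax_r (Rabs (fst x)) (Rabs (snd x))); unfold Im; lra. Qed.

Lemma Cmod_le_Re_Im (x : C) : Cmod x <= Rabs (Re x) + Rabs (Im x).
Proof.
  destruct x as [a b]; unfold Cmod, Re, Im; cbn [fst snd].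
  pose proof (Rabs_pos a); pose proof (Rabs_pos b).
  rewrite <- (sqrt_pow2 (Rabs a + Rabs b)) by lra.
  apply sqrt_le_1_alt. rewrite <- (pow2_abs a), <- (pow2_abs b). nra.
Qed.

Lemma Cmod_sub_triangle (a b c : C) : Cmod (a - c)%C <= Cmod (a - b)%C + Cmod (b - c)%C.
Proof. replace (a - c)%C with ((a - b) + (b - c))%C by ring. apply Cmod_triangle. Qed.

Lemma Cmod_sub_comm (a b : C) : Cmod (a - b)%C = Cmod (b - a)%C.
Proof. replace (a - b)%C with (- (b - a))%C by ring. apply Cmod_opp. Qed.

Lemma Cmod_sub_diag (a : C) : Cmod (a - a)%C = 0.
Proof. replace (a - a)%C with (RtoC 0) by ring. apply Cmod_0. Qed.

Lemma Cmod_sub_gt0 (a b : C) : a <> b -> 0 < Cmod (a - b)%C.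
Proof.
  intros Hab. apply Cmod_gt_0. intros E. apply Hab.
  replace a with ((a - b) + b)%C by ring. rewrite E. ring.
Qed.

Lemma Rabs_Re_mul_le (c x : C) (a : R) : Cmod c <= a -> Rabs (Re (c * x)) <= a * Cmod x.
Proof.
  intros Hc. eapply Rle_trans; [apply Rabs_Re_le_Cmod|]. rewrite Cmod_mult.
  apply Rmult_le_compat_r; [apply Cmod_ge_0|exact Hc].
Qed.

Lemma Rabs_Im_mul_le (c x : C) (a : R) : Cmod c <= a -> Rabs (Im (c * x)) <= a * Cmod x.
Proof.
  intros Hc. eapply Rle_trans; [apply Rabs_Im_le_Cmod|]. rewrite Cmod_mult.
  apply Rmult_le_compat_r; [apply Cmod_ge_0|exact Hc].
Qed.

Definition align (a : R) (x : C) : C := (a * (Cconj x / Cmod x))%C.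

Lemma align_mul (a : R) (x : C) : x <> 0%C -> (align a x * x)%C = RtoC (a * Cmod x).
Proof.
  intros Hx. assert (Hm : Cmod x <> 0) by (apply Rgt_not_eq, Cmod_gt_0, Hx).
  unfold align. rewrite RtoC_mult.
  replace (a * (Cconj x / Cmod x) * x)%C with (a * (x * Cconj x) / Cmod x)%C
    by (field; intros E; apply Hm; injection E; auto).
  rewrite <- Cmod2_conj, RtoC_pow. field. intros E; apply Hm; injection E; auto.
Qed.

Lemma Cmod_align (a : R) (x : C) : 0 <= a -> x <> 0%C -> Cmod (align a x) = a.
Proof.
  intros Ha Hx. assert (Hm : 0 < Cmod x) by (apply Cmod_gt_0, Hx).
  unfold align.
  rewrite Cmod_mult, Cmod_div, Cmod_conj, !Cmod_R, !Rabs_pos_eq by (lra || (intros E; injection E; lra)).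
  field. lra.
Qed.

Definition bounded_by (a : nat -> R) (K : R) : Prop := forall j, Rabs (a j) <= K.

Record bounded_seq_functional (L : (nat -> R) -> R) : Prop := {
  bsf_linear : forall a b (al be Ka Kb : R), bounded_by a Ka -> bounded_by b Kb ->
    L (fun j => al * a j + be * b j) = al * L a + be * L b;
  bsf_bound : forall a K, bounded_by a K -> Rabs (L a) <= K }.

Record free_ultrafilter (U : (nat -> Prop) -> Prop) : Prop := {
  uf_and : forall A B, U A -> U B -> U (fun n => A n /\ B n);
  uf_mono : forall A B : nat -> Prop, U A -> (forall n, A n -> B n) -> U B;
  uf_tail : forall N, U (fun n => (N <= n)%nat);
  uf_proper : ~ U (fun _ => False);
  uf_ultra : forall A, U A \/ U (fun n => ~ A n) }.

Lemma free_ultrafilter_exists : exists U, free_ultrafilter U.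
Proof.
  destruct (filter.ultraFilterLemma filter.eventually_filter) as [U [HU Hev]].
  exists U. split.
  - intros A B; apply filter.filterI.
  - intros A B HA HAB; exact (filter.filterS HAB HA).
  - intros N. apply Hev. exists N; [exact I|].
    intros n Hn. exact (proj2 (Bool.reflect_iff _ _ (@ssrnat.leP N n)) Hn).
  - exact (filter.filter_not_empty U).
  - intros A; exact (filter.in_ultra_setVsetC A HU).
Qed.

Section UltrafilterLimit.
Variable U : (nat -> Prop) -> Prop.
Hypothesis HU : free_ultrafilter U.

Definition ulim_to (a : nat -> R) (l : R) : Prop :=
  forall eps, 0 < eps -> U (fun k => Rabs (a k - l) < eps).

Lemma uf_nonempty (A : nat -> Prop) : U A -> exists n, A n.
Proof.
  intros HA. apply NNPP; intros Hn. apply (uf_proper U HU).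
  apply (uf_mono U HU A); [exact HA|]. intros n Hx. apply Hn. exists n; exact Hx.
Qed.

Lemma ulim_to_unique a l1 l2 : ulim_to a l1 -> ulim_to a l2 -> l1 = l2.
Proof.
  intros H1 H2. apply NNPP; intros Hne.
  assert (He : 0 < Rabs (l1 - l2) / 2)
    by (pose proof (Rabs_pos_lt _ (Rminus_eq_contra _ _ Hne)); lra).
  destruct (uf_nonempty _ (uf_and U HU _ _ (H1 _ He) (H2 _ He))) as [n [Ha Hb]].
  pose proof (Rabs_triang (l1 - a n) (a n - l2)) as Ht.
  replace (l1 - a n + (a n - l2)) with (l1 - l2) in Ht by ring.
  rewrite <- Rabs_Ropp in Ha. replace (- (a n - l1)) with (l1 - a n) in Ha by ring. lra.
Qed.

(* The limit is the supremum of the reals eventually (along [U]) below [a]. *)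
Lemma ulim_to_exists a K : bounded_by a K -> exists l, ulim_to a l.
Proof.
  intros HK.
  set (S := fun t => U (fun k => t <= a k)).
  assert (HSb : bound S).
  { exists K. intros t Ht. apply Rnot_lt_le; intros Hlt.
    destruct (uf_nonempty _ Ht) as [n Hn]. specialize (HK n). apply Rabs_le_between in HK. lra. }
  assert (HSne : exists t, S t).
  { exists (- K). apply (uf_mono U HU _ _ (uf_tail U HU 0)).
    intros n _. specialize (HK n). apply Rabs_le_between in HK. lra. }
  destruct (completeness S HSb HSne) as [l [Hub Hlub]].
  exists l. intros eps Heps.
  assert (Hlow : U (fun k => l - eps < a k)).
  { assert (Ht : exists t, S t /\ l - eps < t).
    { apply NNPP; intros Hn. assert (l <= l - eps); [|lra].
      apply Hlub. intros t Ht. apply Rnot_lt_le. intros Hlt. apply Hn. exists t; auto. }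
    destruct Ht as [t [Ht Hlt]]. apply (uf_mono U HU _ _ Ht). intros n Hn; lra. }
  assert (Hup : U (fun k => a k < l + eps)).
  { destruct (uf_ultra U HU (fun k => l + eps / 2 <= a k)) as [Hc|Hc].
    - exfalso. assert (l + eps / 2 <= l) by (apply Hub; exact Hc). lra.
    - apply (uf_mono U HU _ _ Hc). intros n Hn. apply Rnot_le_lt in Hn. lra. }
  apply (uf_mono U HU _ _ (uf_and U HU _ _ Hlow Hup)). intros n [Ha Hb]. apply Rabs_def1; lra.
Qed.

Lemma ulim_to_lin a b la lb (al be : R) : ulim_to a la -> ulim_to b lb ->
  ulim_to (fun j => al * a j + be * b j) (al * la + be * lb).
Proof.
  intros Ha Hb eps Heps.
  pose proof (Rabs_pos al); pose proof (Rabs_pos be).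
  set (e := eps / (2 * (Rabs al + Rabs be + 1))).
  assert (He : 0 < e) by (apply Rdiv_lt_0_compat; lra).
  assert (Hee : (Rabs al + Rabs be) * e < eps).
  { assert (e * (2 * (Rabs al + Rabs be + 1)) = eps) by (unfold e; field; lra). nra. }
  apply (uf_mono U HU _ _ (uf_and U HU _ _ (Ha e He) (Hb e He))). intros n [H1 H2].
  replace (al * a n + be * b n - (al * la + be * lb)) with (al * (a n - la) + be * (b n - lb)) by ring.
  eapply Rle_lt_trans; [apply Rabs_triang|]. rewrite !Rabs_mult.
  assert (Rabs al * Rabs (a n - la) <= Rabs al * e) by (apply Rmult_le_compat_l; lra).
  assert (Rabs be * Rabs (b n - lb) <= Rabs be * e) by (apply Rmult_le_compat_l; lra).
  nra.
Qed.

Lemma ulim_to_ge a m l : (forall k, m <= a k) -> ulim_to a l -> m <= l.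
Proof.
  intros Hm Hl. apply Rnot_lt_le; intros Hlt.
  destruct (uf_nonempty _ (Hl (m - l) ltac:(lra))) as [n Hn].
  apply Rabs_def2 in Hn. specialize (Hm n). lra.
Qed.

Lemma ulim_to_bound a K l : bounded_by a K -> ulim_to a l -> Rabs l <= K.
Proof.
  intros HK Hl. apply Rnot_lt_le; intros Hlt.
  destruct (uf_nonempty _ (Hl (Rabs l - K) ltac:(lra))) as [n Hn].
  pose proof (Rabs_triang (a n) (l - a n)) as Ht. replace (a n + (l - a n)) with l in Ht by ring.
  rewrite <- Rabs_Ropp in Hn. replace (- (a n - l)) with (l - a n) in Hn by ring.
  specialize (HK n). lra.
Qed.

Definition ulim (a : nat -> R) : R := epsilon (inhabits 0) (ulim_to a).

Lemma ulim_spec a K : bounded_by a K -> ulim_to a (ulim a).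
Proof. intros HK. unfold ulim. apply epsilon_spec. exact (ulim_to_exists a K HK). Qed.

Lemma ulim_bounded_seq_functional : bounded_seq_functional ulim.
Proof.
  split.
  - intros a b al be Ka Kb Ha Hb. apply (ulim_to_unique (fun j => al * a j + be * b j)).
    + apply (ulim_spec _ (Rabs al * Ka + Rabs be * Kb)). intros j.
      eapply Rle_trans; [apply Rabs_triang|]. rewrite !Rabs_mult.
      pose proof (Rabs_pos al); pose proof (Rabs_pos be). specialize (Ha j); specialize (Hb j).
      apply Rplus_le_compat; apply Rmult_le_compat_l; lra.
    + apply ulim_to_lin; [apply (ulim_spec _ Ka Ha)|apply (ulim_spec _ Kb Hb)].
  - intros a K HK. exact (ulim_to_bound a K _ HK (ulim_spec a K HK)).
Qed.

Lemma ulim_ge a K m : bounded_by a K -> (forall k, m <= a k) -> m <= ulim a.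
Proof. intros HK Hm. exact (ulim_to_ge a m _ Hm (ulim_spec a K HK)). Qed.

Lemma ulim_null a K : bounded_by a K ->
  (forall eps, 0 < eps -> exists N, forall k, (N <= k)%nat -> Rabs (a k) < eps) -> ulim a = 0.
Proof.
  intros HK Ha. apply (ulim_to_unique a); [exact (ulim_spec a K HK)|].
  intros eps Heps. destruct (Ha eps Heps) as [N HN].
  apply (uf_mono U HU _ _ (uf_tail U HU N)). intros n Hn. rewrite Rminus_0_r. auto.
Qed.

End UltrafilterLimit.

Lemma ex_series_half_pow : ex_series (fun j => (1/2) ^ (S j)).
Proof.
  apply (@ex_series_ext R_AbsRing R_NormedModule (fun j => scal (1/2) ((1/2) ^ j))); [reflexivity|].
  apply (@ex_series_scal_l R_AbsRing R_NormedModule). apply ex_series_geom. rewrite Rabs_pos_eq; lra.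
Qed.

Lemma Series_half_pow : Series (fun j => (1/2) ^ (S j)) = 1.
Proof.
  rewrite (Series_ext _ (fun j => (1/2) * (1/2) ^ j)) by reflexivity.
  rewrite Series_scal_l, Series_geom by (rewrite Rabs_pos_eq; lra). field.
Qed.

Lemma ex_series_Rabs_le_half_pow (a : nat -> R) (K : R) :
  (forall j, Rabs (a j) <= K * (1/2) ^ (S j)) -> ex_series (fun j => Rabs (a j)).
Proof.
  intros Ha. apply (@ex_series_le R_AbsRing R_CompleteNormedModule _ (fun j => K * (1/2) ^ (S j))).
  - intros j. change (norm (Rabs (a j))) with (Rabs (Rabs (a j))). rewrite Rabs_Rabsolu. apply Ha.
  - apply (@ex_series_ext R_AbsRing R_NormedModule (fun j => scal K ((1/2) ^ (S j)))); [reflexivity|].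
    apply (@ex_series_scal_l R_AbsRing R_NormedModule), ex_series_half_pow.
Qed.

Lemma Rabs_Series_le_half_pow (a : nat -> R) (K : R) :
  (forall j, Rabs (a j) <= K * (1/2) ^ (S j)) -> Rabs (Series a) <= K.
Proof.
  intros Ha. eapply Rle_trans; [apply Series_Rabs; eapply ex_series_Rabs_le_half_pow; eauto|].
  eapply Rle_trans; [apply (Series_le _ (fun j => K * (1/2) ^ (S j)))|].
  - intros j. split; [apply Rabs_pos|apply Ha].
  - apply (@ex_series_ext R_AbsRing R_NormedModule (fun j => scal K ((1/2) ^ (S j)))); [reflexivity|].
    apply (@ex_series_scal_l R_AbsRing R_NormedModule), ex_series_half_pow.
  - rewrite Series_scal_l, Series_half_pow. lra.
Qed.

Section WeightedSeries.
Variable wt : nat -> R.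
Hypothesis wt_range : forall j, 0 <= wt j <= (1/2) ^ (S j).

Definition wseries (a : nat -> R) : R := Series (fun j => wt j * a j).

Lemma wseries_term_bound a K : bounded_by a K -> forall j, Rabs (wt j * a j) <= K * (1/2) ^ (S j).
Proof.
  intros HK j. rewrite Rabs_mult. specialize (wt_range j). specialize (HK j).
  rewrite (Rabs_pos_eq (wt j)) by lra. pose proof (Rabs_pos (a j)).
  assert (0 <= (1/2) ^ (S j)) by (apply pow_le; lra). nra.
Qed.

Lemma ex_wseries a K : bounded_by a K -> ex_series (fun j => wt j * a j).
Proof.
  intros HK. apply ex_series_Rabs, (ex_series_Rabs_le_half_pow _ K), (wseries_term_bound a K HK).
Qed.

Lemma wseries_bounded_seq_functional : bounded_seq_functional wseries.
Proof.
  split.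
  - intros a b al be Ka Kb Ha Hb. unfold wseries.
    rewrite (Series_ext _ (fun j => al * (wt j * a j) + be * (wt j * b j))) by (intros; ring).
    rewrite Series_plus, !Series_scal_l; [reflexivity| |].
    + apply (@ex_series_ext R_AbsRing R_NormedModule (fun j => scal al (wt j * a j))); [reflexivity|].
      apply (@ex_series_scal_l R_AbsRing R_NormedModule). eapply ex_wseries; eauto.
    + apply (@ex_series_ext R_AbsRing R_NormedModule (fun j => scal be (wt j * b j))); [reflexivity|].
      apply (@ex_series_scal_l R_AbsRing R_NormedModule). eapply ex_wseries; eauto.
  - intros a K HK. apply Rabs_Series_le_half_pow, (wseries_term_bound a K HK).
Qed.

End WeightedSeries.

Lemma bsf_combination L a b s (al be Ka Kb : R) : bounded_seq_functional L ->
  bounded_by a Ka -> bounded_by b Kb -> (forall j, s j = al * a j + be * b j) ->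
  L s = al * L a + be * L b.
Proof.
  intros HL Ha Hb Hs. rewrite <- (bsf_linear L HL a b al be Ka Kb Ha Hb).
  f_equal. apply functional_extensionality, Hs.
Qed.

Definition sample_functional (L : (nat -> R) -> R) (w : nat -> Dk) (c : nat -> C) : HD -> C :=
  fun h => (L (fun j => Re (c j * h (w j))%C), L (fun j => Im (c j * h (w j))%C)).

Lemma Hv_dual_sample (v : Dk -> R) L w c : bounded_seq_functional L ->
  (forall j, Cmod (c j) <= v (w j)) -> Hv_dual v (sample_functional L w c).
Proof.
  intros HL Hc.
  assert (Hsamp : forall h M, (forall z, v z * Cmod (h z) <= M) ->
     bounded_by (fun j => Re (c j * h (w j))%C) M /\ bounded_by (fun j => Im (c j * h (w j))%C) M).
  { intros h M HM. split; intros j; eapply Rle_trans;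
      [apply Rabs_Re_mul_le, Hc|apply HM|apply Rabs_Im_mul_le, Hc|apply HM]. }
  split; [|split].
  - intros f g [_ [Mf Hf]] [_ [Mg Hg]].
    destruct (Hsamp f Mf Hf) as [Hf1 Hf2], (Hsamp g Mg Hg) as [Hg1 Hg2].
    assert (Hsum : forall x1 y1 x2 y2 : R, ((x1, y1) + (x2, y2))%C = (x1 + x2, y1 + y2)) by reflexivity.
    unfold sample_functional, fadd. rewrite Hsum. f_equal;
      [rewrite (bsf_combination L _ _ _ 1 1 Mf Mg HL Hf1 Hg1)|
       rewrite (bsf_combination L _ _ _ 1 1 Mf Mg HL Hf2 Hg2)]; try ring;
      intros j; destruct (c j), (f (w j)), (g (w j)); simpl; ring.
  - intros a f [_ [Mf Hf]]. destruct (Hsamp f Mf Hf) as [Hf1 Hf2].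
    assert (Hpair : forall x y : R, (a * (x, y))%C = (Re a * x - Im a * y, Re a * y + Im a * x)).
    { intros x y. destruct a; reflexivity. }
    unfold sample_functional, fscal. rewrite Hpair. f_equal;
      [rewrite (bsf_combination L _ _ _ (Re a) (- Im a) Mf Mf HL Hf1 Hf2)|
       rewrite (bsf_combination L _ _ _ (Im a) (Re a) Mf Mf HL Hf1 Hf2)]; try ring;
      intros j; destruct a, (c j), (f (w j)); simpl; ring.
  - exists 2. intros f K _ HK. destruct (Hsamp f K HK) as [H1 H2].
    pose proof (bsf_bound L HL _ K H1). pose proof (bsf_bound L HL _ K H2).
    eapply Rle_trans; [apply Cmod_le_Re_Im|]. unfold sample_functional; cbn [Re Im fst snd]. lra.
Qed.

Lemma Hv_dual_eval (v : Dk -> R) (z : Dk) : 0 < v z -> Hv_dual v (fun h => h z).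
Proof.
  intros Hvz. split; [|split]; [reflexivity|reflexivity|].
  exists (/ v z). intros f K _ HK. specialize (HK z).
  apply (Rmult_le_reg_l (v z)); [lra|]. rewrite <- Rmult_assoc, Rinv_r by lra. lra.
Qed.

Definition wball (v : Dk -> R) (psi : HD -> C) (c : C) (eps : R) : HD -> Prop :=
  fun h => Hv v h /\ Cmod (psi h - c)%C < eps.

Lemma weak_open_wball v psi c eps : Hv_dual v psi -> weak_open v (wball v psi c eps).
Proof.
  intros Hpsi. split.
  - intros f [Hf _]; exact Hf.
  - intros g [Hg Hgc]. exists (psi :: nil), (eps - Cmod (psi g - c)%C).
    split; [lra|]. split; [constructor; [exact Hpsi|constructor]|].
    intros f Hf Hphi. split; [exact Hf|].
    specialize (Hphi psi (or_introl eq_refl)).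
    pose proof (Cmod_sub_triangle (psi f) (psi g) c). lra.
Qed.

Lemma weak_compact_functional_bounded v Cl psi : weak_compact v Cl -> Hv_dual v psi ->
  exists B, forall h, Cl h -> Cmod (psi h) <= B.
Proof.
  intros [HCl Hcov] Hpsi.
  set (F := fun W : HD -> Prop => exists m : nat, W = wball v psi 0 (INR m)).
  destruct (Hcov F) as [l [Hl Hlc]].
  - intros W [m ->]. apply weak_open_wball, Hpsi.
  - intros g Hg. destruct (INR_unbounded (Cmod (psi g - 0)%C)) as [m Hm].
    exists (wball v psi 0 (INR m)). split; [exists m; reflexivity|].
    split; [apply HCl, Hg|lra].
  - assert (Hlist : exists B, forall W, In W l -> forall h, W h -> Cmod (psi h) <= B).
    { clear Hlc. induction l as [|W l IH].
      - exists 0. intros W [].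
      - inversion Hl as [|? ? [m Hm] Hl']; subst. destruct (IH Hl') as [B HB].
        exists (Rmax (INR m) B). intros W' [<-|HW'] h Hh.
        + destruct Hh as [_ Hh]. replace (psi h - 0)%C with (psi h) in Hh by ring.
          pose proof (Rmax_l (INR m) B). lra.
        + pose proof (HB W' HW' h Hh). pose proof (Rmax_r (INR m) B). lra. }
    destruct Hlist as [B HB]. exists B. intros h Hh.
    destruct (Hlc h Hh) as [W [HW HWh]]. exact (HB W HW h HWh).
Qed.

Lemma weak_compact_cluster_point v Cl (h : nat -> HD) :
  weak_compact v Cl -> (forall k, Cl (h k)) ->
  exists p, Cl p /\ forall psi eps K, Hv_dual v psi -> 0 < eps ->
    exists k, (K <= k)%nat /\ Cmod (psi (h k) - psi p)%C < eps.
Proof.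
  intros [HCl Hcov] Hh. apply NNPP; intros Hno.
  set (F := fun W : HD -> Prop => exists psi c eps K, Hv_dual v psi /\
       (forall k, (K <= k)%nat -> ~ W (h k)) /\ W = wball v psi c eps).
  destruct (Hcov F) as [l [Hl Hlc]].
  - intros W [psi [c [eps [K [Hpsi [_ ->]]]]]]. apply weak_open_wball, Hpsi.
  - intros p Hp.
    assert (Hsep : exists psi eps K, Hv_dual v psi /\ 0 < eps /\
              forall k, (K <= k)%nat -> ~ Cmod (psi (h k) - psi p)%C < eps).
    { apply NNPP; intros Hn. apply Hno. exists p. split; [exact Hp|].
      intros psi eps K Hpsi Heps. apply NNPP; intros Hk. apply Hn.
      exists psi, eps, K. split; [exact Hpsi|]. split; [exact Heps|].
      intros k HKk Hlt. apply Hk. exists k. split; assumption. }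
    destruct Hsep as [psi [eps [K [Hpsi [Heps Hfar]]]]].
    exists (wball v psi (psi p) eps). split.
    + exists psi, (psi p), eps, K. split; [exact Hpsi|]. split; [|reflexivity].
      intros k Hk [_ Hin]. exact (Hfar k Hk Hin).
    + split; [apply HCl, Hp|]. rewrite Cmod_sub_diag. exact Heps.
  - assert (Hlist : exists K, forall W, In W l -> forall k, (K <= k)%nat -> ~ W (h k)).
    { clear Hlc. induction l as [|W l IH].
      - exists 0%nat. intros W [].
      - inversion Hl as [|? ? [psi [c [eps [K0 [_ [Hfar _]]]]]] Hl']; subst.
        destruct (IH Hl') as [K1 HK1].
        exists (Nat.max K0 K1). intros W' [<-|HW'] k Hk.
        + apply Hfar. lia.
        + apply (HK1 W' HW'). lia. }
    destruct Hlist as [K HK].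
    destruct (Hlc (h K) (Hh K)) as [W [HW HWh]].
    exact (HK W HW K (le_n K) HWh).
Qed.

Section GlidingHump.
Variables (v : Dk -> R) (A : HD -> Prop) (nrm : HD -> R) (B : Dk -> R) (pick : R -> HD * Dk).
Hypothesis v_pos : forall z, 0 < v z.
Hypothesis nrm_spec : forall h z, A h -> v z * Cmod (h z) <= nrm h.
Hypothesis B_spec : forall h z, A h -> Cmod (h z) <= B z.
Hypothesis pick_in : forall M, A (fst (pick M)).
Hypothesis pick_large : forall M, M < v (snd (pick M)) * Cmod (fst (pick M) (snd (pick M))).

(* The [k]-th pick [h_k] is sampled with a weight that is small against the norms
   of all earlier picks, and is chosen so large at its point [w_k] that this sample
   beats the point bounds at all earlier [w_j]: in [phi h_k] the [k]-th term dominates. *)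
Definition hump_weight (Q : R) (k : nat) : R := (1/2) ^ (S k) / (1 + Q).
Definition hump_level (Q P : R) (k : nat) : R := (INR k + P + 2) / hump_weight Q k.

Fixpoint hump_state (k : nat) : R * R :=
  match k with
  | O => (0, 0)
  | S k' =>
      let s := hump_state k' in
      let p := pick (hump_level (fst s) (snd s) k') in
      (fst s + Rabs (nrm (fst p)), snd s + v (snd p) * Rabs (B (snd p)))
  end.

Definition hump_Q (k : nat) : R := fst (hump_state k).
Definition hump_P (k : nat) : R := snd (hump_state k).
Definition hump_fun (k : nat) : HD := fst (pick (hump_level (hump_Q k) (hump_P k) k)).
Definition hump_pt (k : nat) : Dk := snd (pick (hump_level (hump_Q k) (hump_P k) k)).
Definition hump_wt (k : nat) : R := hump_weight (hump_Q k) k.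
Definition hump_coef (j : nat) : C := align (v (hump_pt j)) (hump_fun j (hump_pt j)).
Definition hump_functional : HD -> C := sample_functional (wseries hump_wt) hump_pt hump_coef.

Lemma hump_Q_S k : hump_Q (S k) = hump_Q k + Rabs (nrm (hump_fun k)).
Proof. reflexivity. Qed.

Lemma hump_P_S k : hump_P (S k) = hump_P k + v (hump_pt k) * Rabs (B (hump_pt k)).
Proof. reflexivity. Qed.

Lemma hump_Q_nonneg k : 0 <= hump_Q k.
Proof.
  induction k as [|k IH]; [unfold hump_Q; simpl; lra|].
  rewrite hump_Q_S. pose proof (Rabs_pos (nrm (hump_fun k))). lra.
Qed.

Lemma hump_P_sum m : hump_P (S m) = sum_f_R0 (fun j => v (hump_pt j) * Rabs (B (hump_pt j))) m.
Proof.
  induction m as [|m IH]; rewrite hump_P_S; [unfold hump_P; simpl; ring|].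
  rewrite IH. reflexivity.
Qed.

Lemma hump_P_nonneg k : 0 <= hump_P k.
Proof.
  destruct k as [|m]; [unfold hump_P; simpl; lra|]. rewrite hump_P_sum.
  apply cond_pos_sum. intros j.
  pose proof (v_pos (hump_pt j)). pose proof (Rabs_pos (B (hump_pt j))). nra.
Qed.

Lemma hump_nrm_le_Q k j : (k < j)%nat -> Rabs (nrm (hump_fun k)) <= hump_Q j.
Proof.
  intros Hkj. induction Hkj as [|j Hkj IH]; rewrite hump_Q_S.
  - pose proof (hump_Q_nonneg k). lra.
  - pose proof (Rabs_pos (nrm (hump_fun j))). lra.
Qed.

Lemma hump_wt_range k : 0 < hump_wt k <= (1/2) ^ (S k).
Proof.
  unfold hump_wt, hump_weight. pose proof (hump_Q_nonneg k).
  assert (0 < (1/2) ^ (S k)) by (apply pow_lt; lra).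
  split; [apply Rdiv_lt_0_compat; lra|].
  apply Rmult_le_reg_r with (1 + hump_Q k); [lra|]. field_simplify; [|lra]. nra.
Qed.

Lemma hump_fun_in k : A (hump_fun k).
Proof. apply pick_in. Qed.

Lemma hump_fun_large k :
  INR k + hump_P k + 2 < hump_wt k * (v (hump_pt k) * Cmod (hump_fun k (hump_pt k))).
Proof.
  pose proof (hump_wt_range k) as Hwt.
  replace (INR k + hump_P k + 2) with (hump_wt k * hump_level (hump_Q k) (hump_P k) k)
    by (unfold hump_level, hump_wt; field; unfold hump_weight; apply Rgt_not_eq, Hwt).
  apply Rmult_lt_compat_l; [lra|apply pick_large].
Qed.

Lemma hump_fun_pt_neq0 k : hump_fun k (hump_pt k) <> 0%C.
Proof.
  intros E. pose proof (hump_fun_large k) as Hl. rewrite E, Cmod_0, Rmult_0_r, Rmult_0_r in Hl.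
  pose proof (pos_INR k). pose proof (hump_P_nonneg k). lra.
Qed.

Lemma Cmod_hump_coef j : Cmod (hump_coef j) = v (hump_pt j).
Proof. apply Cmod_align; [apply Rlt_le, v_pos|apply hump_fun_pt_neq0]. Qed.

Lemma hump_functional_dual : Hv_dual v hump_functional.
Proof.
  apply Hv_dual_sample.
  - apply wseries_bounded_seq_functional. intros j. pose proof (hump_wt_range j). lra.
  - intros j. rewrite Cmod_hump_coef. lra.
Qed.

Definition hump_term (k j : nat) : R := hump_wt j * Re (hump_coef j * hump_fun k (hump_pt j))%C.

Lemma hump_term_abs k j :
  Rabs (hump_term k j) <= hump_wt j * (v (hump_pt j) * Cmod (hump_fun k (hump_pt j))).
Proof.
  pose proof (hump_wt_range j). unfold hump_term. rewrite Rabs_mult, (Rabs_pos_eq (hump_wt j)) by lra.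
  apply Rmult_le_compat_l; [lra|]. apply Rabs_Re_mul_le. rewrite Cmod_hump_coef. lra.
Qed.

Lemma hump_term_diag k : INR k + hump_P k + 2 < hump_term k k.
Proof.
  unfold hump_term, hump_coef. rewrite align_mul by apply hump_fun_pt_neq0.
  apply hump_fun_large.
Qed.

Lemma hump_term_head k : hump_term k k - hump_P k <= sum_f_R0 (hump_term k) k.
Proof.
  destruct k as [|m]; [unfold hump_P; simpl; lra|].
  cut (Rabs (sum_f_R0 (hump_term (S m)) m) <= hump_P (S m)).
  { intros Hhead. simpl. apply Rabs_le_between in Hhead. lra. }
  rewrite hump_P_sum. eapply Rle_trans; [apply sum_f_R0_triangle|]. apply sum_Rle.
  intros j _. eapply Rle_trans; [apply hump_term_abs|].
  pose proof (hump_wt_range j). pose proof (v_pos (hump_pt j)).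
  pose proof (B_spec (hump_fun (S m)) (hump_pt j) (hump_fun_in (S m))).
  pose proof (Rle_abs (B (hump_pt j))). pose proof (Cmod_ge_0 (hump_fun (S m) (hump_pt j))).
  assert (hump_wt j <= 1) by (pose proof (pow_lt_1_compat (1/2) (S j) ltac:(lra) ltac:(lia)); lra).
  assert (v (hump_pt j) * Cmod (hump_fun (S m) (hump_pt j)) <= v (hump_pt j) * Rabs (B (hump_pt j)))
    by (apply Rmult_le_compat_l; lra).
  assert (0 <= v (hump_pt j) * Cmod (hump_fun (S m) (hump_pt j))) by nra.
  nra.
Qed.

Lemma hump_term_bounded k :
  bounded_by (fun j => Re (hump_coef j * hump_fun k (hump_pt j))%C) (nrm (hump_fun k)).
Proof.
  intros j. eapply Rle_trans; [apply Rabs_Re_mul_le; rewrite Cmod_hump_coef; apply Rle_refl|].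
  apply nrm_spec, hump_fun_in.
Qed.

Lemma hump_term_tail k : Rabs (Series (fun i => hump_term k (S k + i))) <= 1.
Proof.
  apply Rabs_Series_le_half_pow. intros i. set (j := (S k + i)%nat).
  pose proof (hump_wt_range j) as Hwt. pose proof (hump_Q_nonneg j).
  pose proof (hump_nrm_le_Q k j ltac:(unfold j; lia)).
  unfold hump_term. rewrite Rabs_mult, (Rabs_pos_eq (hump_wt j)) by lra.
  assert (Hterm : Rabs (Re (hump_coef j * hump_fun k (hump_pt j))%C) <= hump_Q j).
  { eapply Rle_trans; [apply hump_term_bounded|]. eapply Rle_trans; [apply Rle_abs|]. assumption. }
  assert (Hhalf : (1/2) ^ (S j) <= (1/2) ^ (S i)).
  { unfold j. replace (S (S k + i)) with (S k + S i)%nat by lia. rewrite pow_add.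
    pose proof (pow_lt_1_compat (1/2) (S k) ltac:(lra) ltac:(lia)).
    pose proof (pow_lt (1/2) (S i) ltac:(lra)). nra. }
  apply Rle_trans with (hump_wt j * (1 + hump_Q j)).
  - apply Rmult_le_compat_l; [lra|]. lra.
  - unfold hump_wt, hump_weight. replace ((1/2) ^ (S j) / (1 + hump_Q j) * (1 + hump_Q j))
      with ((1/2) ^ (S j)) by (field; lra). lra.
Qed.

Lemma hump_functional_large k : INR k < Cmod (hump_functional (hump_fun k)).
Proof.
  assert (Hex : ex_series (hump_term k)).
  { apply (ex_wseries hump_wt) with (nrm (hump_fun k)); [|apply hump_term_bounded].
    intros j. pose proof (hump_wt_range j). lra. }
  assert (HRe : Re (hump_functional (hump_fun k)) = Series (hump_term k)) by reflexivity.
  rewrite (Series_incr_n _ (S k) ltac:(lia) Hex) in HRe. simpl Nat.pred in HRe.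
  pose proof (hump_term_diag k). pose proof (hump_term_head k).
  pose proof (hump_term_tail k) as Htail. apply Rabs_le_between in Htail.
  pose proof (Rabs_Re_le_Cmod (hump_functional (hump_fun k))).
  pose proof (Rle_abs (Re (hump_functional (hump_fun k)))). lra.
Qed.

Lemma gliding_hump : exists phi, Hv_dual v phi /\ forall K, exists h, A h /\ K < Cmod (phi h).
Proof.
  exists hump_functional. split; [exact hump_functional_dual|].
  intros K. destruct (INR_unbounded K) as [k Hk]. exists (hump_fun k).
  split; [apply hump_fun_in|]. pose proof (hump_functional_large k). lra.
Qed.

End GlidingHump.

Lemma weak_compact_Hv_bounded v Cl : (forall z, 0 < v z) -> weak_compact v Cl ->
  exists M, forall h z, Cl h -> v z * Cmod (h z) <= M.
Proof.
  intros v_pos Hwc. apply NNPP; intros Hno.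
  assert (Hlarge : forall M, exists p : HD * Dk, Cl (fst p) /\ M < v (snd p) * Cmod (fst p (snd p))).
  { intros M. apply NNPP; intros Hn. apply Hno. exists M. intros h z Hh.
    apply Rnot_lt_le; intros Hlt. apply Hn. exists (h, z). auto. }
  assert (Hnrm : forall h, exists M, Cl h -> forall z, v z * Cmod (h z) <= M).
  { intros h. destruct (classic (Cl h)) as [Hh|Hh]; [|exists 0; tauto].
    destruct (proj1 Hwc h Hh) as [_ [M HM]]. exists M. auto. }
  assert (Hpt : forall z, exists B, forall h, Cl h -> Cmod (h z) <= B).
  { intros z. exact (weak_compact_functional_bounded v Cl _ Hwc (Hv_dual_eval v z (v_pos z))). }
  destruct (choice _ Hlarge) as [pick Hpick].
  destruct (choice _ Hnrm) as [nrm Hnrm'].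
  destruct (choice _ Hpt) as [B HB].
  destruct (gliding_hump v Cl nrm B pick) as [phi [Hphi Hbig]];
    [exact v_pos|intros h z Hh; exact (Hnrm' h Hh z)|intros h z Hh; exact (HB z h Hh)|
     intros M; apply Hpick|intros M; apply Hpick|].
  destruct (weak_compact_functional_bounded v Cl phi Hwc Hphi) as [K HK].
  destruct (Hbig K) as [h [Hh HKh]]. pose proof (HK h Hh). lra.
Qed.

Lemma fscal_0 (f : HD) : fscal 0 f = fzero.
Proof. apply functional_extensionality; intros z. unfold fscal, fzero. ring. Qed.

Lemma linear_op_fzero T : linear_op_HD T -> holo fzero -> T fzero = fzero.
Proof.
  intros [_ [_ Hscal]] H0. rewrite <- (fscal_0 fzero) at 1. rewrite (Hscal _ _ H0). apply fscal_0.
Qed.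

Lemma weak_closure_incl v A : (forall h, A h -> Hv v h) -> forall h, A h -> weak_closure v A h.
Proof. intros HA h Hh. split; [exact (HA h Hh)|]. intros W _ HW. exists h. auto. Qed.

Lemma weakly_compact_op_bounded v X N T : (forall z, 0 < v z) -> banach_subspace X N ->
  linear_op_HD T -> weakly_compact_op v X N T ->
  exists M, forall f, X f -> forall z, v z * Cmod (T f z) <= M * N f.
Proof.
  intros v_pos HX HT [HTv Hwc].
  destruct HX as [Xholo [X0 [_ [Xscal [Npos [Ndef [Nscal _]]]]]]].
  destruct (weak_compact_Hv_bounded v _ v_pos Hwc) as [M HM].
  exists M. intros f Hf z. pose proof (Npos f Hf) as HNf.
  destruct (Req_dec (N f) 0) as [HN0|HN0].
  - rewrite HN0, (Ndef f Hf HN0), linear_op_fzero by auto.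
    unfold fzero. rewrite Cmod_0. lra.
  - set (f1 := fscal (RtoC (/ N f)) f).
    assert (Hf1 : X f1 /\ N f1 <= 1).
    { split; [apply Xscal, Hf|]. unfold f1. rewrite Nscal by exact Hf.
      rewrite Cmod_R, Rabs_pos_eq by (apply Rlt_le, Rinv_0_lt_compat; lra).
      rewrite Rinv_l by lra. lra. }
    assert (HM1 : v z * Cmod (T f1 z) <= M).
    { apply HM. apply weak_closure_incl; [intros h [g [Hg [_ ->]]]; apply HTv, Hg|].
      exists f1. split; [apply Hf1|]. split; [apply Hf1|reflexivity]. }
    unfold f1 in HM1. rewrite (proj2 (proj2 HT)) in HM1 by (apply Xholo, Hf).
    unfold fscal in HM1.
    rewrite Cmod_mult, Cmod_R, Rabs_pos_eq in HM1 by (apply Rlt_le, Rinv_0_lt_compat; lra).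
    apply (Rmult_le_compat_r (N f)) in HM1; [|lra].
    replace (v z * (/ N f * Cmod (T f z)) * N f) with (v z * Cmod (T f z)) in HM1 by (field; lra).
    exact HM1.
Qed.

Definition Ccvg (x : nat -> C) (a : C) : Prop :=
  forall eps, 0 < eps -> exists K, forall k, (K <= k)%nat -> Cmod (x k - a)%C < eps.

Lemma Ccvg_unique x a b : Ccvg x a -> Ccvg x b -> a = b.
Proof.
  intros Ha Hb. apply NNPP; intros Hne.
  pose proof (Cmod_sub_gt0 a b Hne) as Hab.
  destruct (Ha (Cmod (a - b)%C / 2) ltac:(lra)) as [K1 H1].
  destruct (Hb (Cmod (a - b)%C / 2) ltac:(lra)) as [K2 H2].
  specialize (H1 (Nat.max K1 K2) (Nat.le_max_l _ _)). specialize (H2 (Nat.max K1 K2) (Nat.le_max_r _ _)).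
  pose proof (Cmod_sub_triangle a (x (Nat.max K1 K2)) b) as Ht.
  rewrite (Cmod_sub_comm a (x _)) in Ht. lra.
Qed.

Lemma Ccvg_subseq x a (phi : nat -> nat) : (forall n, (n <= phi n)%nat) -> Ccvg x a ->
  Ccvg (fun n => x (phi n)) a.
Proof.
  intros Hphi Hx eps Heps. destruct (Hx eps Heps) as [K HK].
  exists K. intros k Hk. apply HK. specialize (Hphi k). lia.
Qed.

Lemma Ccvg_scal x a (c : C) : Ccvg x a -> Ccvg (fun k => c * x k)%C (c * a)%C.
Proof.
  intros Hx eps Heps. pose proof (Cmod_ge_0 c).
  destruct (Hx (eps / (Cmod c + 1)) ltac:(apply Rdiv_lt_0_compat; lra)) as [K HK].
  exists K. intros k Hk. specialize (HK k Hk).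
  replace (c * x k - c * a)%C with (c * (x k - a))%C by ring. rewrite Cmod_mult.
  apply Rle_lt_trans with (Cmod c * (eps / (Cmod c + 1))).
  - apply Rmult_le_compat_l; lra.
  - apply Rmult_lt_reg_r with (Cmod c + 1); [lra|]. field_simplify; lra.
Qed.

Lemma strict_mono_ge (phi : nat -> nat) :
  (forall n, (phi n < phi (S n))%nat) -> forall n, (n <= phi n)%nat.
Proof. intros Hphi n. induction n as [|n IH]; [lia|]. specialize (Hphi n). lia. Qed.

Definition radius (n : nat) : R := 1 - / (INR n + 2).

Lemma radius_range n : 0 <= radius n < 1.
Proof.
  unfold radius. pose proof (pos_INR n).
  assert (0 < / (INR n + 2)) by (apply Rinv_0_lt_compat; lra).
  assert (/ (INR n + 2) <= 1); [|lra]. rewrite <- Rinv_1. apply Rinv_le_contravar; lra.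
Qed.

Lemma radius_cvg del : 0 < del -> exists K, forall n, (K <= n)%nat -> 1 - radius n < del.
Proof.
  intros Hd. destruct (INR_unbounded (/ del)) as [K HK]. exists K. intros n Hn.
  apply le_INR in Hn. assert (0 < / del) by (apply Rinv_0_lt_compat; lra).
  unfold radius. replace (1 - (1 - / (INR n + 2))) with (/ (INR n + 2)) by ring.
  rewrite <- (Rinv_inv del). apply Rinv_lt_contravar; [|lra]. apply Rmult_lt_0_compat; lra.
Qed.

Lemma Dk_eq (w z : Dk) : proj1_sig w = proj1_sig z -> w = z.
Proof. destruct w as [w Hw], z as [z Hz]; simpl; intros ->. f_equal. apply proof_irrelevance. Qed.

Lemma holo_continuous f : holo f -> forall z eps, 0 < eps -> exists del, 0 < del /\
  forall w : Dk, Cmod (proj1_sig w - proj1_sig z)%C < del -> Cmod (f w - f z)%C < eps.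
Proof.
  intros Hf z eps Heps. destruct (Hf z) as [l Hl]. destruct (Hl 1 ltac:(lra)) as [d1 [Hd1 H1]].
  pose proof (Cmod_ge_0 l).
  exists (Rmin d1 (eps / (Cmod l + 1))). split.
  { apply Rmin_pos; [lra|apply Rdiv_lt_0_compat; lra]. }
  intros w Hw. pose proof (Rmin_l d1 (eps / (Cmod l + 1))). pose proof (Rmin_r d1 (eps / (Cmod l + 1))).
  set (d := (proj1_sig w - proj1_sig z)%C) in *.
  destruct (Ceq_dec d 0) as [Hd0|Hd0].
  - assert (w = z) as ->.
    { apply Dk_eq. replace (proj1_sig w) with (d + proj1_sig z)%C by (unfold d; ring).
      rewrite Hd0. ring. }
    rewrite Cmod_sub_diag. lra.
  - assert (Hdpos : 0 < Cmod d) by (apply Cmod_gt_0, Hd0).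
    set (q := ((f w - f z) / d)%C).
    assert (Hq : Cmod q < Cmod l + 1).
    { assert (Hdd1 : Cmod d < d1) by lra. specialize (H1 w (conj Hdpos Hdd1)). fold d q in H1.
      replace q with ((q - l) + l)%C by ring. pose proof (Cmod_triangle (q - l) l). lra. }
    replace (f w - f z)%C with (q * d)%C by (unfold q; field; exact Hd0).
    rewrite Cmod_mult. apply Rle_lt_trans with ((Cmod l + 1) * Cmod d).
    + apply Rmult_le_compat_r; lra.
    + apply Rlt_le_trans with ((Cmod l + 1) * (eps / (Cmod l + 1))).
      * apply Rmult_lt_compat_l; lra.
      * right. field. lra.
Qed.

Lemma dil_pt_val r z : 0 <= r < 1 -> proj1_sig (dil_pt r z) = (r * proj1_sig z)%C.
Proof.
  intros Hr. unfold dil_pt. destruct (Rlt_dec (Rabs r) 1) as [H|H]; [reflexivity|].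
  exfalso. rewrite Rabs_pos_eq in H by lra. lra.
Qed.

Lemma dil_pt_dist r z : 0 <= r < 1 -> Cmod (proj1_sig (dil_pt r z) - proj1_sig z)%C <= 1 - r.
Proof.
  intros Hr. rewrite dil_pt_val by exact Hr.
  replace (r * proj1_sig z - proj1_sig z)%C with ((r - 1)%R * proj1_sig z)%C
    by (rewrite RtoC_minus; ring).
  rewrite Cmod_mult, Cmod_R, Rabs_left1 by lra.
  destruct z as [z Hz]; simpl. pose proof (Cmod_ge_0 z). nra.
Qed.

Lemma dil_Ccvg f z (r : nat -> R) : holo f -> (forall n, 0 <= r n < 1) ->
  (forall del, 0 < del -> exists K, forall n, (K <= n)%nat -> 1 - r n < del) ->
  Ccvg (fun n => dil (r n) f z) (f z).
Proof.
  intros Hf Hr Hr1 eps Heps. destruct (holo_continuous f Hf z eps Heps) as [del [Hdel Hcont]].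
  destruct (Hr1 del Hdel) as [K HK]. exists K. intros n Hn. apply Hcont.
  eapply Rle_lt_trans; [apply dil_pt_dist, Hr|apply HK, Hn].
Qed.

Lemma uc_conv_Ccvg fs g : uc_conv fs g -> forall z, Ccvg (fun n => fs n z) (g z).
Proof.
  intros Hc z eps Heps. destruct (Hc (Cmod (proj1_sig z)) (conj (Cmod_ge_0 _) (proj2_sig z)) eps Heps)
    as [K HK].
  exists K. intros n Hn. exact (HK n Hn z (Rle_refl _)).
Qed.

(* Interleaving [fs] with its limit [g] forces the limit of [T] along the
   interleaved sequence to be [T g]. *)
Lemma intrinsic_Ccvg T fs g : intrinsic T -> (forall n, holo (fs n)) -> holo g -> uc_conv fs g ->
  forall z, Ccvg (fun k => T (fs k) z) (T g z).
Proof.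
  intros HT Hfs Hg Hc z.
  set (u := fun n => if Nat.even n then g else fs (Nat.div2 n)).
  assert (Hu_even : forall k, u (2 * k)%nat = g).
  { intros k. unfold u. rewrite Nat.even_mul. reflexivity. }
  assert (Hu_odd : forall k, u (S (2 * k)) = fs k).
  { intros k. unfold u. rewrite Nat.even_succ, Nat.odd_mul, Nat.div2_succ_double. reflexivity. }
  assert (Huc : uc_conv u g).
  { intros r Hr e He. destruct (Hc r Hr e He) as [K HK]. exists (2 * K)%nat.
    intros n Hn w Hw. destruct (Nat.Even_or_Odd n) as [[m ->]|[m ->]].
    - rewrite Hu_even, Cmod_sub_diag. exact He.
    - replace (2 * m + 1)%nat with (S (2 * m)) by lia. rewrite Hu_odd. apply HK; [lia|exact Hw]. }
  destruct (HT u g) as [h [_ Hh]]; [intros n; unfold u; destruct (Nat.even n); auto|exact Hg|exact Huc|].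
  pose proof (uc_conv_Ccvg _ _ Hh z) as Hhz.
  assert (HhTg : h z = T g z).
  { apply (Ccvg_unique (fun k => T (u (2 * k)%nat) z)).
    - apply (Ccvg_subseq (fun n => T (u n) z)); [intros n; lia|exact Hhz].
    - intros eps Heps. exists 0%nat. intros k _. rewrite Hu_even, Cmod_sub_diag. exact Heps. }
  rewrite <- HhTg.
  pose proof (Ccvg_subseq (fun n => T (u n) z) (h z) (fun k => S (2 * k))
                ltac:(intros n; cbv beta; lia) Hhz) as Hodd.
  intros eps Heps. destruct (Hodd eps Heps) as [K HK]. exists K. intros k Hk.
  specialize (HK k Hk). cbv beta in HK. rewrite Hu_odd in HK. exact HK.
Qed.

Lemma holo_fscal (a : C) f : holo f -> holo (fscal a f).
Proof.
  intros Hf z. destruct (Hf z) as [l Hl]. exists (a * l)%C. intros eps Heps.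
  pose proof (Cmod_ge_0 a).
  destruct (Hl (eps / (Cmod a + 1)) ltac:(apply Rdiv_lt_0_compat; lra)) as [del [Hdel Hw]].
  exists del. split; [exact Hdel|]. intros w Hwz. specialize (Hw w Hwz).
  assert (Hd : (proj1_sig w - proj1_sig z)%C <> 0%C) by (apply Cmod_gt_0; lra).
  unfold fscal.
  replace ((a * f w - a * f z) / (proj1_sig w - proj1_sig z) - a * l)%C
    with (a * ((f w - f z) / (proj1_sig w - proj1_sig z) - l))%C by (field; exact Hd).
  rewrite Cmod_mult. apply Rle_lt_trans with (Cmod a * (eps / (Cmod a + 1))).
  - apply Rmult_le_compat_l; lra.
  - apply Rmult_lt_reg_r with (Cmod a + 1); [lra|]. field_simplify; lra.
Qed.

Lemma Hv0_fscal v (a : C) h : Hv0 v h -> Hv0 v (fscal a h).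
Proof.
  intros [Hh H0]. split; [apply holo_fscal, Hh|]. intros eps Heps. pose proof (Cmod_ge_0 a).
  destruct (H0 (eps / (Cmod a + 1)) ltac:(apply Rdiv_lt_0_compat; lra)) as [rho [Hrho Hr]].
  exists rho. split; [exact Hrho|]. intros z Hz. specialize (Hr z Hz).
  unfold fscal. rewrite Cmod_mult.
  replace (v z * (Cmod a * Cmod (h z))) with (Cmod a * (v z * Cmod (h z))) by ring.
  apply Rle_lt_trans with (Cmod a * (eps / (Cmod a + 1))).
  - apply Rmult_le_compat_l; lra.
  - apply Rmult_lt_reg_r with (Cmod a + 1); [lra|]. field_simplify; lra.
Qed.

(* A Banach limit of the samples [v(w_k) h(w_k)] along points [w_k] tending to the
   boundary, rotated so that the samples of [g] are real and at least [eps0]. *)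
Lemma Hv_dual_separate_Hv0 v g : (forall z, 0 < v z) -> Hv v g -> ~ Hv0 v g ->
  exists phi, Hv_dual v phi /\ phi g <> 0%C /\ forall h, Hv v h -> Hv0 v h -> phi h = 0%C.
Proof.
  intros v_pos [Hg [Mg HMg]] Hg0.
  assert (Heps0 : exists eps0, 0 < eps0 /\ forall rho, rho < 1 ->
            exists z : Dk, rho < Cmod (proj1_sig z) /\ eps0 <= v z * Cmod (g z)).
  { apply NNPP; intros Hn. apply Hg0. split; [exact Hg|]. intros eps Heps.
    apply NNPP; intros Hr. apply Hn. exists eps. split; [exact Heps|]. intros rho Hrho.
    apply NNPP; intros Hz. apply Hr. exists rho. split; [exact Hrho|]. intros z Hrz.
    apply Rnot_le_lt. intros Hle. apply Hz. exists z. auto. }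
  destruct Heps0 as [eps0 [Heps0 Hfar]].
  destruct (choice _ (fun k => Hfar (radius k) (proj2 (radius_range k)))) as [w Hw].
  assert (Hgw : forall k, g (w k) <> 0%C).
  { intros k E. destruct (Hw k) as [_ Hk]. rewrite E, Cmod_0, Rmult_0_r in Hk. lra. }
  destruct free_ultrafilter_exists as [U HU].
  set (c := fun k => align (v (w k)) (g (w k))).
  assert (Hc : forall k, Cmod (c k) = v (w k))
    by (intros k; apply Cmod_align; [apply Rlt_le, v_pos|apply Hgw]).
  assert (Hbd : forall h M, (forall z, v z * Cmod (h z) <= M) ->
     bounded_by (fun k => Re (c k * h (w k))%C) M /\ bounded_by (fun k => Im (c k * h (w k))%C) M).
  { intros h M HM. split; intros k; eapply Rle_trans;
      [apply Rabs_Re_mul_le; rewrite Hc; apply Rle_refl|apply HM|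
       apply Rabs_Im_mul_le; rewrite Hc; apply Rle_refl|apply HM]. }
  exists (sample_functional (ulim U) w c). split; [|split].
  - apply Hv_dual_sample; [apply ulim_bounded_seq_functional, HU|intros k; rewrite Hc; lra].
  - intros E. assert (HRe : eps0 <= Re (sample_functional (ulim U) w c g)).
    { apply (ulim_ge U HU _ Mg); [apply (Hbd g Mg HMg)|].
      intros k. unfold c. rewrite align_mul by apply Hgw. apply Hw. }
    rewrite E in HRe. simpl in HRe. lra.
  - intros h [_ [Mh HMh]] [_ Hh0]. destruct (Hbd h Mh HMh) as [HRe HIm].
    assert (Hsmall : forall eps, 0 < eps -> exists K, forall k, (K <= k)%nat ->
              v (w k) * Cmod (h (w k)) < eps).
    { intros eps Heps. destruct (Hh0 eps Heps) as [rho [Hrho Hr]].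
      destruct (radius_cvg (1 - rho) ltac:(lra)) as [K HK]. exists K. intros k Hk.
      apply Hr. specialize (HK k Hk). destruct (Hw k). lra. }
    unfold sample_functional. apply injective_projections; cbn [fst snd RtoC];
      [apply (ulim_null U HU _ Mh HRe)|apply (ulim_null U HU _ Mh HIm)];
      intros eps Heps; destruct (Hsmall eps Heps) as [K HK]; exists K; intros k Hk;
      (eapply Rle_lt_trans; [|apply (HK k Hk)]);
      [apply Rabs_Re_mul_le|apply Rabs_Im_mul_le]; rewrite Hc; apply Rle_refl.
Qed.

Lemma Hv0_weak_cluster_limit v Cl (h : nat -> HD) g : (forall z, 0 < v z) -> weak_compact v Cl ->
  (forall k, Cl (h k)) -> (forall k, Hv0 v (h k)) -> Hv v g ->
  (forall z, Ccvg (fun k => h k z) (g z)) -> Hv0 v g.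
Proof.
  intros v_pos Hwc Hh Hh0 Hg Hcvg. apply NNPP; intros Hg0.
  destruct (Hv_dual_separate_Hv0 v g v_pos Hg Hg0) as [phi [Hphi [Hphig Hphi0]]].
  destruct (weak_compact_cluster_point v Cl h Hwc Hh) as [p [_ Hclus]].
  assert (Hpg : p = g).
  { apply functional_extensionality. intros z. apply NNPP; intros Hne.
    pose proof (Cmod_sub_gt0 _ _ Hne) as Hpos.
    destruct (Hcvg z (Cmod (p z - g z)%C / 2) ltac:(lra)) as [K HK].
    destruct (Hclus (fun f => f z) (Cmod (p z - g z)%C / 2) K (Hv_dual_eval v z (v_pos z)) ltac:(lra))
      as [k [Hk Hkz]].
    specialize (HK k Hk). pose proof (Cmod_sub_triangle (p z) (h k z) (g z)) as Ht.
    rewrite (Cmod_sub_comm (p z) (h k z)) in Ht. cbv beta in Hkz. lra. }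
  subst p.
  destruct (Hclus phi (Cmod (phi g)) 0%nat Hphi (proj1 (Cmod_gt_0 _) Hphig)) as [k [_ Hk]].
  rewrite (Hphi0 (h k) (proj1 Hwc _ (Hh k)) (Hh0 k)) in Hk.
  replace (0 - phi g)%C with (- phi g)%C in Hk by ring. rewrite Cmod_opp in Hk. lra.
Qed.

Lemma fscal_fscal_inv (c : R) h : c <> 0 -> fscal c (fscal (RtoC (/ c)) h) = h.
Proof.
  intros Hc. apply functional_extensionality; intros z. unfold fscal; cbv beta.
  rewrite Cmult_assoc, <- RtoC_mult, Rinv_r, Cmult_1_l by exact Hc. reflexivity.
Qed.

Lemma weakly_compact_op_Hv0 v X N T : (forall z, 0 < v z) -> initial_space X N ->
  (forall f r, X f -> 0 <= r < 1 -> X (dil r f)) ->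
  (exists C0, forall f, X f -> forall r, 0 <= r < 1 -> N (dil r f) <= C0 * N f) ->
  linear_op_HD T -> intrinsic T ->
  (forall f r, X f -> 0 <= r < 1 -> Hv0 v (T (dil r f))) ->
  weakly_compact_op v X N T -> forall f, X f -> Hv0 v (T f).
Proof.
  intros v_pos [[Xholo [_ [_ [Xscal [Npos [_ [Nscal _]]]]]]] [_ Xball]] Xdil [C0 HC0]
    [_ [_ Tscal]] HTi HTdil [HTv Hwc] f Hf.
  set (c := Rmax C0 0 * N f + 1).
  assert (Hc : 1 <= c) by (pose proof (Rmax_r C0 0); pose proof (Npos f Hf); unfold c; nra).
  assert (Hic : 0 < / c) by (apply Rinv_0_lt_compat; lra).
  set (fs := fun n => fscal (RtoC (/ c)) (dil (radius n) f)).
  assert (Hfs : forall n, X (fs n) /\ N (fs n) <= 1).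
  { intros n. pose proof (Xdil f _ Hf (radius_range n)) as Hd. split; [apply Xscal, Hd|].
    unfold fs. rewrite Nscal, Cmod_R, Rabs_pos_eq by (exact Hd || lra).
    assert (N (dil (radius n) f) <= c).
    { eapply Rle_trans; [apply HC0, radius_range; exact Hf|]. unfold c.
      pose proof (Rmax_l C0 0). pose proof (Npos f Hf). nra. }
    apply Rle_trans with (/ c * c); [apply Rmult_le_compat_l; lra|]. rewrite Rinv_l by lra. lra. }
  destruct (Xball fs Hfs) as [ph [g [Hph [_ Hgc]]]].
  set (G := fscal (RtoC (/ c)) f).
  assert (HgG : g = G).
  { apply functional_extensionality. intros z. apply (Ccvg_unique (fun n => fs (ph n) z)).
    - exact (uc_conv_Ccvg _ _ Hgc z).
    - apply Ccvg_scal, (dil_Ccvg f z (fun n => radius (ph n)) (Xholo f Hf));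
        [intros; apply radius_range|].
      intros del Hdel. destruct (radius_cvg del Hdel) as [K HK]. exists K. intros n Hn.
      apply HK. pose proof (strict_mono_ge ph Hph n). lia. }
  subst g.
  assert (HTG : Hv0 v (T G)).
  { apply (Hv0_weak_cluster_limit v _ (fun k => T (fs (ph k))) (T G) v_pos Hwc).
    - intros k. apply weak_closure_incl; [intros h [f' [Hf' [_ ->]]]; apply HTv, Hf'|].
      exists (fs (ph k)). split; [apply Hfs|]. split; [apply Hfs|reflexivity].
    - intros k. unfold fs. rewrite Tscal by (apply Xholo, Xdil; [exact Hf|apply radius_range]).
      apply Hv0_fscal, HTdil; [exact Hf|apply radius_range].
    - apply HTv, Xscal, Hf.
    - apply (intrinsic_Ccvg T (fun k => fs (ph k)) G HTi);
        [intros k; apply Xholo, Hfs|apply Xholo, Xscal, Hf|exact Hgc]. }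
  unfold G in HTG. rewrite Tscal in HTG by apply Xholo, Hf.
  rewrite <- (fscal_fscal_inv c (T f)) by lra. apply Hv0_fscal, HTG.
Qed.

Theorem theorem3p3 (v : Dk -> R) (X : HD -> Prop) (N : HD -> R) (T : HD -> HD) :
  typical_weight v ->
  initial_space X N ->
  (forall f r, X f -> 0 <= r < 1 -> X (dil r f)) ->
  (exists C0 : R, forall f, X f -> forall r, 0 <= r < 1 -> N (dil r f) <= C0 * N f) ->
  linear_op_HD T ->
  intrinsic T ->
  (forall f r, X f -> 0 <= r < 1 -> Hv0 v (T (dil r f))) ->
  weakly_compact_op v X N T ->
  (forall f, X f -> Hv0 v (T f)) /\
  exists M : R, forall f, X f -> forall z : Dk, v z * Cmod (T f z) <= M * N f.
Proof.
  intros Hv HX Xdil HC0 HT HTi HTdil Hwc.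
  assert (v_pos : forall z, 0 < v z) by (intros z; apply (proj1 Hv z)).
  split.
  - exact (weakly_compact_op_Hv0 v X N T v_pos HX Xdil HC0 HT HTi HTdil Hwc).
  - exact (weakly_compact_op_bounded v X N T v_pos (proj1 HX) HT Hwc).
Qed.
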